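(* Let $G=(L\cup R,E)$ be a $(c,d)$-regular bipartite graph with $L=[n]$, $C_0\subseteq\mathbb{F}_2^d$ a linear code of minimum distance $d_0$, $t=d_0/2$, $x\in\mathbb{F}_2^n$, $y\in T(G,C_0)$ and $F=\{i\in[n]:x_i\ne y_i\}$. Then the number of $i\in[n]\setminus F$ such that $p_i>0$ at the end of $\mathsf{RandFlip}(x)$ is at most $\frac ct|F|$. In particular, for $x'=\mathsf{RandFlip}(x)$, one always has $d_H(x',y)\le\left(1+\frac ct\right)d_H(x,y)$.
   Context: A bipartite graph is $(c,d)$-regular if left degrees are $c$ and right degrees $d$. Tanner code: $L=[n]$, for each $v\in R$ a fixed ordering of $N(v)$ defines $x_{N(v)}\in\mathbb{F}_2^d$, and $T(G,C_0)=\{x:x_{N(v)}\in C_0\ \forall v\in R\}$. $d_H$ is Hamming distance. $\mathsf{Decode}(z)$ for $z\in\mathbb{F}_2^d$ is the codeword of $C_0$ closest to $z$, ties broken lexicographically. $\mathsf{RandFlip}(x)$: set $t=d_0/2$ and $p_1=\dots=p_n=0$; for each $v\in R$, let $w_v=\mathsf{Decode}(x_{N(v)})$; if $1\le d_H(w_v,x_{N(v)})<t$, let $i$ be the smallest element of $N(v)$ at which $w_v$ and $x_{N(v)}$ differ and increase $p_i$ by $\frac{t-d_H(w_v,x_{N(v)})}{ct}$. Then flip each $x_i$ independently with probability $p_i$ and return the result. *)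

From mathcomp Require Import all_boot all_order all_algebra.
Set Implicit Arguments. Unset Strict Implicit. Unset Printing Implicit Defensive.
Import Order.TTheory GRing.Theory Num.Theory.
Local Open Scope ring_scope.

Definition dH (m : nat) (x y : 'rV['F_2]_m) : nat := #|[set j | x ord0 j != y ord0 j]|.

(* Linear code over F_2: contains 0 and closed under addition
   (scalar multiplication by 0/1 is then automatic). *)
Definition linear_code (m : nat) (C : {set 'rV['F_2]_m}) : Prop :=
  0 \in C /\ {in C &, forall u v, u + v \in C}.

Definition min_dist (m : nat) (C : {set 'rV['F_2]_m}) (d0 : nat) : Prop :=
  (exists u v, [/\ u \in C, v \in C, u != v & dH u v = d0]) /\
  {in C &, forall u v, u != v -> (d0 <= dH u v)%N}.

(* Bipartite graph G = (L u R, E) with L = 'I_n, R a finite type;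
   nbr v : 'I_d -> 'I_n is the fixed ordering of N(v).
   (c,d)-regular: each nbr v is injective (so |N(v)| = d) and every left
   vertex lies in exactly c neighbourhoods. *)
Definition cd_regular (n d c : nat) (R : finType) (nbr : R -> 'I_d -> 'I_n) : Prop :=
  (forall v, injective (nbr v)) /\
  (forall i : 'I_n, #|[set v | i \in codom (nbr v)]| = c).

Definition restr (n d : nat) (nbr : 'I_d -> 'I_n) (x : 'rV['F_2]_n) : 'rV['F_2]_d :=
  \row_j x ord0 (nbr j).

Definition tanner (n d : nat) (R : finType) (nbr : R -> 'I_d -> 'I_n)
  (C0 : {set 'rV['F_2]_d}) : {set 'rV['F_2]_n} :=
  [set x | [forall v, restr (nbr v) x \in C0]].

(* Lexicographic rank of a word: the binary number whose most significant
   bit is coordinate 0 (so the lexicographic order on words of length m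
   coincides with the order on lex_rank). *)
Definition lex_rank (m : nat) (w : 'rV['F_2]_m) : nat :=
  (\sum_(j < m) ((w ord0 j != 0%R) : nat) * 2 ^ (m.-1 - j))%N.

(* Sort key: first Hamming distance to z, then lexicographic order. *)
Definition dec_key (m : nat) (z w : 'rV['F_2]_m) : nat :=
  (dH w z * 2 ^ m + lex_rank w)%N.

Definition Decode (m : nat) (C0 : {set 'rV['F_2]_m}) (z : 'rV['F_2]_m) : 'rV['F_2]_m :=
  [arg min_(w < 0 in C0) dec_key z w].

(* Smallest element (of [n]) of N(v) at which two words differ;
   n if they agree everywhere. *)
Definition first_diff (n d : nat) (nbr : 'I_d -> 'I_n) (w z : 'rV['F_2]_d) : nat :=
  \big[minn/n]_(j < d | w ord0 j != z ord0 j) (nbr j : nat).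

Definition randflip_p (n d c : nat) (R : finType) (nbr : R -> 'I_d -> 'I_n)
  (C0 : {set 'rV['F_2]_d}) (d0 : nat) (x : 'rV['F_2]_n) (i : 'I_n) : rat :=
  let t : rat := d0%:R / 2 in
  \sum_(v : R |
         let xv := restr (nbr v) x in
         let wv := Decode C0 xv in
         [&& (1 <= dH wv xv)%N, ((dH wv xv)%:R < t)%R
           & (i : nat) == first_diff (nbr v) wv xv])
     (t - (dH (Decode C0 (restr (nbr v) x)) (restr (nbr v) x))%:R) / (c%:R * t).

(* Support of the output of RandFlip(x): each x_i is flipped independently
   with probability p_i, so x' is a possible output iff x'_i = x_i whenever
   p_i = 0 and x'_i <> x_i whenever p_i >= 1. *)
Definition randflip_outcome (n d c : nat) (R : finType) (nbr : R -> 'I_d -> 'I_n)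
  (C0 : {set 'rV['F_2]_d}) (d0 : nat) (x x' : 'rV['F_2]_n) : Prop :=
  forall i : 'I_n,
    (randflip_p c nbr C0 d0 x i = 0 -> x' ord0 i = x ord0 i) /\
    (1 <= randflip_p c nbr C0 d0 x i -> x' ord0 i != x ord0 i).

From mathcomp Require Import all_boot all_order all_algebra.
From mathcomp Require Import lra.
Import Order.TTheory GRing.Theory Num.Theory.
Set Implicit Arguments.
Unset Strict Implicit.
Unset Printing Implicit Defensive.
Local Open Scope ring_scope.

(** A check [v] can raise [p_i] for a coordinate [i] outside [F] only if the
    decoded codeword [w_v] differs from [x_{N(v)}] at [i], where [x] and [y]
    agree; so [w_v] and [y_{N(v)}] are distinct codewords, and since [x_{N(v)}]
    is within [t = d0/2] of [w_v] it is more than [t] away from [y_{N(v)}].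
    Each such check thus sees more than [t] errors of [F], while by
    [c]-regularity the checks see [c |F|] errors in total: there are fewer
    than [c |F| / t] of them, and each raises a single [p_i]. *)

Section Hamming.

Variable m : nat.
Implicit Types u v w : 'rV['F_2]_m.

Lemma dH_triangle u v w : (dH u w <= dH u v + dH v w)%N.
Proof.
rewrite /dH -cardsUI; apply: leq_trans (leq_addr _ _).
apply/subset_leq_card/subsetP => j; rewrite !inE.
by case: (u ord0 j =P v ord0 j) => //= ->.
Qed.

Lemma dH_gt0 u v : u != v -> (0 < dH u v)%N.
Proof.
apply: contraNT; rewrite -eqn0Ngt cards_eq0 => /eqP uv.
apply/eqP/matrixP => i j; rewrite [i]ord1; apply/eqP.
by have := congr1 (fun A : {set 'I_m} => j \in A) uv; rewrite !inE => /negbFE.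
Qed.

Lemma dH_gt_half_min_dist (K : realFieldType) d0 u v w :
  (d0 <= dH u w)%N -> ((dH u v)%:R < d0%:R / 2 :> K) ->
  (d0%:R / 2 < (dH v w)%:R :> K).
Proof.
move=> /leq_trans /(_ (dH_triangle u v w)); rewrite -(ler_nat K) natrD.
by move=> ? ?; lra.
Qed.

End Hamming.

Lemma Decode_in m (C : {set 'rV['F_2]_m}) z : 0 \in C -> Decode C z \in C.
Proof. by move=> C0; rewrite /Decode; case: arg_minnP. Qed.

Lemma first_diff_witness n d (nbr : 'I_d -> 'I_n) w z (i : 'I_n) :
  (i : nat) = first_diff nbr w z -> exists2 j, w ord0 j != z ord0 j & nbr j = i.
Proof.
apply: (big_rec (fun k => (i : nat) = k -> exists2 j, w ord0 j != z ord0 j & nbr j = i)).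
  by move/eqP; rewrite ltn_eqF.
move=> j k wzj IH; rewrite /minn; case: ltnP => _ // eq_i.
by exists j => //; apply: val_inj.
Qed.

Lemma dH_restr n d (nbr : 'I_d -> 'I_n) x y : injective nbr ->
  dH (restr nbr x) (restr nbr y) =
  #|[set i | x ord0 i != y ord0 i] :&: [set i in codom nbr]|.
Proof.
move=> inj; rewrite /dH -(card_imset _ inj); apply: eq_card => i.
rewrite !inE; apply/imsetP/andP => [[j] | [xyi /codomP [j eq_i]]].
  by rewrite inE /restr !mxE => xyj ->; rewrite xyj codom_f.
by exists j; rewrite // inE /restr !mxE -eq_i.
Qed.

Lemma sum_card_setI_nbr n d c (R : finType) (nbr : R -> 'I_d -> 'I_n) F :
  (forall i, #|[set v | i \in codom (nbr v)]| = c) ->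
  (\sum_v #|F :&: [set i in codom (nbr v)]| = c * #|F|)%N.
Proof.
move=> reg.
under eq_bigr do rewrite -sum1_card big_mkcond /=.
rewrite exchange_big /= -sum1_card big_distrr /= muln1 [RHS]big_mkcond /=.
apply: eq_bigr => i _; rewrite -(reg i) -sum1_card.
case: (boolP (i \in F)) => Fi; last by rewrite big1 // => v _; rewrite inE (negbTE Fi).
by rewrite [RHS]big_mkcond; apply: eq_bigr => v _; rewrite !inE Fi.
Qed.

Lemma card_gt_mulr_le_sum (K : realDomainType) (I : finType) (a : I -> K) t :
  (forall i, 0 <= a i) -> #|[set i | t < a i]|%:R * t <= \sum_i a i.
Proof.
move=> a_ge0; rewrite mulr_natl -sumr_const [leRHS](bigID (mem [set i | t < a i])) /=.
rewrite -[X in X <= _]addr0 lerD //; last exact: sumr_ge0.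
by apply: ler_sum => i; rewrite inE => /ltW.
Qed.

Section RandFlip.

Variables (n d c : nat) (R : finType) (nbr : R -> 'I_d -> 'I_n).
Variables (C0 : {set 'rV['F_2]_d}) (d0 : nat) (x y : 'rV['F_2]_n).

Let t : rat := d0%:R / 2.
Let p := randflip_p c nbr C0 d0 x.
Let F := [set i : 'I_n | x ord0 i != y ord0 i].
Let I := [set i in ~: F | 0 < p i].
Let V := [set v | t < (dH (restr (nbr v) x) (restr (nbr v) y))%:R].

Definition raises (v : R) (i : 'I_n) : bool :=
  let xv := restr (nbr v) x in
  let wv := Decode C0 xv in
  [&& (1 <= dH wv xv)%N, (dH wv xv)%:R < d0%:R / 2 :> rat
    & (i : nat) == first_diff (nbr v) wv xv].

Lemma randflip_p_ge0 i : 0 <= p i.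
Proof.
apply: sumr_ge0 => v /and3P [_ close _].
by rewrite divr_ge0 ?mulr_ge0 ?divr_ge0 // subr_ge0 ltW.
Qed.

Lemma randflip_p_gt0 i : 0 < p i -> exists v, raises v i.
Proof.
case: (pickP (raises^~ i)) => [v raised _ | none]; first by exists v.
by rewrite /p /randflip_p big_pred0 ?ltxx.
Qed.

Hypothesis C0_0 : 0 \in C0.
Hypothesis C0_min : {in C0 &, forall u v, u != v -> (d0 <= dH u v)%N}.
Hypothesis y_tanner : y \in tanner nbr C0.

Lemma raises_outside_far v i : raises v i -> i \notin F -> v \in V.
Proof.
case/and3P => _ close /eqP /first_diff_witness [j wx_j nbr_j].
rewrite !inE negbK => /eqP xy_i.
have w_C0 : Decode C0 (restr (nbr v) x) \in C0 := Decode_in _ C0_0.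
have yv_C0 : restr (nbr v) y \in C0 by move: y_tanner; rewrite inE => /forallP.
apply: dH_gt_half_min_dist close; apply: C0_min => //.
by apply: contraNneq wx_j => ->; rewrite /restr !mxE nbr_j xy_i.
Qed.

Lemma card_raised_outside_le : (#|I| <= #|V|)%N.
Proof.
have [-> | [i0 _]] := set_0Vmem I; first by rewrite cards0.
pose f v : 'I_n :=
  insubd i0 (first_diff (nbr v) (Decode C0 (restr (nbr v) x)) (restr (nbr v) x)).
apply: leq_trans (leq_imset_card f V); apply/subset_leq_card/subsetP => i.
rewrite inE => /andP [Fi /randflip_p_gt0 [v raised]]; apply/imsetP; exists v.
  by apply: raises_outside_far raised _; rewrite inE in Fi.
by apply: val_inj; case/and3P: raised => _ _ /eqP eq_i; rewrite val_insubd -eq_i ltn_ord.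
Qed.

Lemma card_far_mul_le : cd_regular c nbr -> #|V|%:R * t <= (c * #|F|)%:R.
Proof.
case=> inj reg; rewrite -(sum_card_setI_nbr F reg) natr_sum.
under eq_bigr => v _ do rewrite -(dH_restr x y (inj v)).
by apply: card_gt_mulr_le_sum => v; apply: ler0n.
Qed.

Lemma dH_randflip_outcome_le x' :
  randflip_outcome c nbr C0 d0 x x' -> (dH x' y <= #|F| + #|I|)%N.
Proof.
move=> out; rewrite /dH -cardsUI; apply: leq_trans (leq_addr _ _).
apply/subset_leq_card/subsetP => i; rewrite !inE.
case: (boolP (x ord0 i != y ord0 i)) => //= /negbNE /eqP xy_i.
rewrite lt_def randflip_p_ge0 andbT; apply: contraNN => /eqP /(out i).1 ->.
by rewrite xy_i.
Qed.

End RandFlip.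

Theorem lemma3p4 (n d c : nat) (R : finType) (nbr : R -> 'I_d -> 'I_n)
  (C0 : {set 'rV['F_2]_d}) (d0 : nat) (x y : 'rV['F_2]_n) :
  cd_regular c nbr ->
  linear_code C0 ->
  min_dist C0 d0 ->
  y \in tanner nbr C0 ->
  let t : rat := (d0%:R / 2)%R in
  let F := [set i : 'I_n | x ord0 i != y ord0 i] in
  ((#|[set i in ~: F | (0 < randflip_p c nbr C0 d0 x i)%R]|%:R
      <= c%:R / t * #|F|%:R)%R
   /\ forall x' : 'rV['F_2]_n, randflip_outcome c nbr C0 d0 x x' ->
      ((dH x' y)%:R <= (1 + c%:R / t) * (dH x y)%:R :> rat)%R).
Proof.
move=> regular [C0_0 _] [[u [v [_ _ uv duv]]] C0_min] y_tanner t F.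
have t_gt0 : 0 < t by rewrite divr_gt0 // ltr0n -duv dH_gt0.
set I := [set i in ~: F | _].
have I_le : #|I|%:R * t <= (c * #|F|)%:R.
  apply: le_trans _ (card_far_mul_le d0 x y regular).
  by rewrite ler_pM2r // ler_nat (card_raised_outside_le c x C0_0).
have I_le_F : #|I|%:R <= c%:R / t * #|F|%:R by rewrite mulrAC ler_pdivlMr // -natrM.
split=> // x' /(dH_randflip_outcome_le y) dH_le.
apply: le_trans (_ : _ <= #|F|%:R + #|I|%:R) _; first by rewrite -natrD ler_nat.
by rewrite mulrDl mul1r lerD2l.
Qed.
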